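(* Let $\mathcal{A}$ be a lattice tree automaton and $E$ a set of (conditional) approximation equations. If $\mathcal{A}'$ is obtained from $\mathcal{A}$ by merging states equivalent with respect to $E$ (written $\mathcal{A}\leadsto^!_E\mathcal{A}'$), then $\mathcal{L}(\mathcal{A})\subseteq\mathcal{L}(\mathcal{A}')$.
   Context: Lattice tree automaton (LTA) $\mathcal{A}=\langle\mathcal{F},\mathcal{Q},\mathcal{Q}_f,\Delta\rangle$ over an atomic lattice $\Lambda$: alphabet $\mathcal{F}=\mathcal{F}_\circ\cup\mathcal{F}_\bullet^{\#}$ (passive symbols, and interpreted symbols = elements of $\Lambda$ plus abstract operations, evaluated by a function $eval$ into $\Lambda$), finite states $\mathcal{Q}$, final states $\mathcal{Q}_f$, normalized transitions $f(q_1,\dots,q_n)\to q$ including lambda transitions $\lambda\to q$ ($\lambda\in\Lambda\setminus\{\bot\}$). Runs: a subterm over interpreted symbols whose evaluation is $\sqsubseteq\lambda$ may be replaced by $q$ if $\lambda\to q\in\Delta$; $f(q_1,\dots,q_n)$ may be replaced by $q$ if $f(q_1,\dots,q_n)\to q\in\Delta$. $\mathcal{L}(\mathcal{A},q)$ is the set of ground terms $t$ over passive symbols, operations and atoms of $\Lambda$ such that some $t'$ with $t\sqsubseteq t'$ (componentwise order, comparing interpreted subterms by their evaluations) satisfies $t'\to^*_{\mathcal{A}}q$; $\mathcal{L}(\mathcal{A})=\bigcup_{q\in\mathcal{Q}_f}\mathcal{L}(\mathcal{A},q)$. $merge(\mathcal{A},q_1,q_2)$ is the automaton obtained by replacing every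 occurrence of state $q_2$ (in transitions and in the set of final states) by $q_1$. Approximation equations have the form $u=v\Leftarrow c_1\wedge\dots\wedge c_n$ with $u,v$ terms with variables over passive and interpreted symbols. Two distinct states $q,q'$ are equivalent w.r.t. $E$ if there is an equation and a substitution $\sigma$ from variables to states such that (after abstracting concrete constants) $u\sigma\to^*_{\mathcal{A}}q$, $v\sigma\to^*_{\mathcal{A}}q'$ and the constraints $c_1\wedge\dots\wedge c_n$ are satisfiable for $\sigma$. $\mathcal{A}\leadsto^!_E\mathcal{A}'$ means $\mathcal{A}'$ is obtained by merging states of $\mathcal{A}$ equivalent w.r.t. $E$ until no more merges apply. *)

From Stdlib Require Import List Relations.
Import ListNotations.
Set Implicit Arguments.

Record lattice := Lattice {
  lcar :> Type;
  lle : lcar -> lcar -> Prop;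
  lmeet : lcar -> lcar -> lcar;
  ljoin : lcar -> lcar -> lcar;
  lbot : lcar;
  lle_refl : forall x, lle x x;
  lle_trans : forall x y z, lle x y -> lle y z -> lle x z;
  lle_antisym : forall x y, lle x y -> lle y x -> x = y;
  lmeet_glb : forall x y z, lle z (lmeet x y) <-> (lle z x /\ lle z y);
  ljoin_lub : forall x y z, lle (ljoin x y) z <-> (lle x z /\ lle y z);
  lbot_least : forall x, lle lbot x
}.

Definition atom (La : lattice) (a : La) : Prop :=
  a <> lbot La /\ forall b : La, lle La b a -> b = lbot La \/ b = a.

Definition atomic (La : lattice) : Prop :=
  forall x : La, x <> lbot La -> exists a, atom La a /\ lle La a x.

Section LTA.
Variable La : lattice.
(* passive symbols, abstract operations, their arities and the
   interpretation [eval] of operations into the lattice *)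
Variables (P O : Type) (parity : P -> nat) (oarity : O -> nat).
Variable opeval : O -> list La -> La.
(* states and (equation) variables *)
Variables (Q X : Type).
Variable Qdec : forall q q' : Q, {q = q'} + {q <> q'}.

(* Terms: passive symbols, abstract operations, lattice elements,
   states (for run configurations), variables (for equations). *)
Inductive term : Type :=
  | TP : P -> list term -> term
  | TO : O -> list term -> term
  | TC : La -> term
  | TQ : Q -> term
  | TV : X -> term.

Fixpoint teval (t : term) : option La :=
  match t with
  | TC l => Some l
  | TO o ts =>
      let fix go (ts : list term) : option (list La) :=
        match ts with
        | [] => Some []
        | u :: r => match teval u, go r with
                    | Some a, Some l => Some (a :: l)
                    | _, _ => None
                    end
        end in
      match go ts with Some ls => Some (opeval o ls) | None => None end
  | _ => None
  end.

Fixpoint wf (t : term) : Prop :=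
  match t with
  | TP p ts => length ts = parity p /\ (fix go ts := match ts with
                 | [] => True | u :: r => wf u /\ go r end) ts
  | TO o ts => length ts = oarity o /\ (fix go ts := match ts with
                 | [] => True | u :: r => wf u /\ go r end) ts
  | _ => True
  end.

Fixpoint ground_atoms (t : term) : Prop :=
  match t with
  | TP _ ts | TO _ ts => (fix go ts := match ts with
                 | [] => True | u :: r => ground_atoms u /\ go r end) ts
  | TC l => atom La l
  | TQ _ => False
  | TV _ => False
  end.

Fixpoint subst (s : X -> Q) (t : term) : term :=
  match t with
  | TP p ts => TP p (map (subst s) ts)
  | TO o ts => TO o (map (subst s) ts)
  | TV x => TQ (s x)
  | u => u
  end.

Definition rn (q1 q2 q : Q) : Q := if Qdec q q2 then q1 else q.

Inductive fsym : Type := SP : P -> fsym | SO : O -> fsym.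

Definition fsym_arity (f : fsym) : nat :=
  match f with SP p => parity p | SO o => oarity o end.

Definition fapp (f : fsym) (ts : list term) : term :=
  match f with SP p => TP p ts | SO o => TO o ts end.

Inductive trans : Type :=
  | TrSym : fsym -> list Q -> Q -> trans
  | TrLam : La -> Q -> trans.

Record lta : Type := LTA { delta : list trans; finals : list Q }.

Definition wf_lta (A : lta) : Prop :=
  forall tr, In tr (delta A) ->
    match tr with
    | TrSym f qs _ => length qs = fsym_arity f
    | TrLam l _ => l <> lbot La
    end.

Inductive rstep (A : lta) : term -> term -> Prop :=
  | rs_lam : forall t v l q, teval t = Some v -> lle La v l ->
      In (TrLam l q) (delta A) -> rstep A t (TQ q)
  | rs_sym : forall f qs q, In (TrSym f qs q) (delta A) ->
      rstep A (fapp f (map TQ qs)) (TQ q).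

Inductive step (A : lta) : term -> term -> Prop :=
  | st_root : forall t t', rstep A t t' -> step A t t'
  | st_P : forall p l1 l2 t t', step A t t' ->
      step A (TP p (l1 ++ t :: l2)) (TP p (l1 ++ t' :: l2))
  | st_O : forall o l1 l2 t t', step A t t' ->
      step A (TO o (l1 ++ t :: l2)) (TO o (l1 ++ t' :: l2)).

Definition steps (A : lta) : term -> term -> Prop := clos_refl_trans _ (step A).

Inductive tle : term -> term -> Prop :=
  | tle_eval : forall t t' v v', teval t = Some v -> teval t' = Some v' ->
      lle La v v' -> tle t t'
  | tle_P : forall p ts ts', Forall2 tle ts ts' -> tle (TP p ts) (TP p ts').

Definition lang_q (A : lta) (q : Q) (t : term) : Prop :=
  wf t /\ ground_atoms t /\
  exists t', wf t' /\ tle t t' /\ steps A t' (TQ q).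

Definition lang (A : lta) (t : term) : Prop :=
  exists q, In q (finals A) /\ lang_q A q t.

Definition rn_trans (q1 q2 : Q) (tr : trans) : trans :=
  match tr with
  | TrSym f qs q => TrSym f (map (rn q1 q2) qs) (rn q1 q2 q)
  | TrLam l q => TrLam l (rn q1 q2 q)
  end.

Definition merge (A : lta) (q1 q2 : Q) : lta :=
  LTA (map (rn_trans q1 q2) (delta A)) (map (rn q1 q2) (finals A)).

(* Conditional approximation equations u = v <= c1 /\ ... /\ cn.
   The conjunction of constraints is given by its satisfiability
   predicate for a substitution sigma (from variables to states) in the
   current automaton. *)
Record equation : Type := Equation {
  eq_lhs : term;
  eq_rhs : term;
  eq_cond : lta -> (X -> Q) -> Prop
}.

Definition equiv_states (E : list equation) (A : lta) (q q' : Q) : Prop :=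
  q <> q' /\
  exists e sigma, In e E /\
    steps A (subst sigma (eq_lhs e)) (TQ q) /\
    steps A (subst sigma (eq_rhs e)) (TQ q') /\
    eq_cond e A sigma.

Inductive merge_step (E : list equation) : lta -> lta -> Prop :=
  | ms : forall A q q', equiv_states E A q q' -> merge_step E A (merge A q q').

Definition merge_norm (E : list equation) (A A' : lta) : Prop :=
  clos_refl_trans _ (merge_step E) A A' /\
  ~ (exists q q', equiv_states E A' q q').

End LTA.

(* Merging states is an instance of applying a map h : Q -> Q to every state of
   an automaton. Such a map sends every run t ->* q of A to a run t ->* h q of
   the image automaton (lambda and normalized transitions are mapped along),
   and it leaves evaluation, well-formedness and the order on terms untouched. *)
From Stdlib Require Import List Relations.
Import ListNotations.
Set Implicit Arguments.

Section NestedTerms.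
Variables (La : lattice) (P O Q X : Type).
Variables (parity : P -> nat) (oarity : O -> nat) (opeval : O -> list La -> La).

Notation term := (term La P O Q X).

Definition term_nested_ind (Pr : term -> Prop)
  (hP : forall p ts, Forall Pr ts -> Pr (TP p ts))
  (hO : forall o ts, Forall Pr ts -> Pr (TO o ts))
  (hC : forall l, Pr (@TC La P O Q X l))
  (hQ : forall q, Pr (@TQ La P O Q X q))
  (hV : forall x, Pr (@TV La P O Q X x)) : forall t, Pr t :=
  fix F t := match t with
  | TP p ts => hP p ts ((fix G ts : Forall Pr ts := match ts with
        | [] => Forall_nil _ | u :: r => Forall_cons u (F u) (G r) end) ts)
  | TO o ts => hO o ts ((fix G ts : Forall Pr ts := match ts with
        | [] => Forall_nil _ | u :: r => Forall_cons u (F u) (G r) end) ts)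
  | @TC _ _ _ _ _ l => hC l
  | @TQ _ _ _ _ _ q => hQ q
  | @TV _ _ _ _ _ x => hV x
  end.

(* The inner fixpoints of [teval] and [wf], named so that they can be rewritten. *)
Fixpoint teval_list (ts : list term) : option (list La) :=
  match ts with
  | [] => Some []
  | u :: r => match teval opeval u, teval_list r with
              | Some a, Some l => Some (a :: l)
              | _, _ => None
              end
  end.

Lemma teval_TO o ts : teval opeval (TO o ts) =
  match teval_list ts with Some ls => Some (opeval o ls) | None => None end.
Proof. reflexivity. Qed.

Fixpoint wf_list (ts : list term) : Prop :=
  match ts with [] => True | u :: r => wf parity oarity u /\ wf_list r end.

Lemma wf_TP p ts : wf parity oarity (TP p ts) = (length ts = parity p /\ wf_list ts).
Proof. reflexivity. Qed.

Lemma wf_TO o ts : wf parity oarity (TO o ts) = (length ts = oarity o /\ wf_list ts).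
Proof. reflexivity. Qed.

End NestedTerms.

Lemma Forall2_map_r A B (R : A -> B -> Prop) (f : B -> B) l l' :
  Forall (fun y => forall x, R x y -> R x (f y)) l' ->
  Forall2 R l l' -> Forall2 R l (map f l').
Proof.
  intros Hf H2; induction H2 as [|x y l l' Hxy _ IH]; simpl; constructor.
  - inversion Hf; auto.
  - inversion Hf; auto.
Qed.

Section StateMap.
Variables (La : lattice) (P O Q X : Type).
Variables (parity : P -> nat) (oarity : O -> nat) (opeval : O -> list La -> La).
Variable h : Q -> Q.

Notation term := (term La P O Q X).

Fixpoint term_map_states (t : term) : term :=
  match t with
  | TP p ts => TP p (map term_map_states ts)
  | TO o ts => TO o (map term_map_states ts)
  | @TQ _ _ _ _ _ q => @TQ La P O Q X (h q)
  | u => u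
  end.

Definition trans_map_states (tr : trans La P O Q) : trans La P O Q :=
  match tr with
  | @TrSym _ _ _ _ f qs q => TrSym La f (map h qs) (h q)
  | @TrLam _ _ _ _ l q => TrLam La P O l (h q)
  end.

Definition lta_map_states (A : lta La P O Q) : lta La P O Q :=
  LTA (map trans_map_states (delta A)) (map h (finals A)).

Lemma teval_map_states t : teval opeval (term_map_states t) = teval opeval t.
Proof.
  induction t as [p ts _|o ts IH| | |] using term_nested_ind; try reflexivity.
  change (term_map_states (TO o ts)) with (TO o (map term_map_states ts)).
  rewrite !teval_TO.
  enough (teval_list opeval (map term_map_states ts) = teval_list opeval ts)
    as -> by reflexivity.
  induction IH as [|u r Hu _ IHr]; simpl; [reflexivity|].
  rewrite Hu, IHr; reflexivity.
Qed.

Lemma wf_map_states t : wf parity oarity t -> wf parity oarity (term_map_states t).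
Proof.
  assert (Hlist : forall ts,
    Forall (fun t => wf parity oarity t -> wf parity oarity (term_map_states t)) ts ->
    wf_list parity oarity ts -> wf_list parity oarity (map term_map_states ts)).
  { intros ts H; induction H; simpl; tauto. }
  induction t as [p ts IH|o ts IH| | |] using term_nested_ind; try tauto.
  - change (term_map_states (TP p ts)) with (TP p (map term_map_states ts)).
    rewrite !wf_TP, length_map; intuition.
  - change (term_map_states (TO o ts)) with (TO o (map term_map_states ts)).
    rewrite !wf_TO, length_map; intuition.
Qed.

Lemma tle_map_states t t' :
  tle opeval t t' -> tle opeval t (term_map_states t').
Proof.
  revert t; induction t' as [p ts' IH|o ts' _| | |] using term_nested_ind;
    intros t Hle; inversion Hle as [? ? v v' Ht Ht' Hv|? ts ? Hts]; subst;
    try (eapply tle_eval; [exact Ht| rewrite teval_map_states; exact Ht' | exact Hv]).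
  constructor; exact (Forall2_map_r _ IH Hts).
Qed.

Lemma fapp_map_states f qs :
  term_map_states (fapp f (map (@TQ La P O Q X) qs)) =
  fapp f (map (@TQ La P O Q X) (map h qs)).
Proof. destruct f; simpl; rewrite !map_map; reflexivity. Qed.

Lemma step_map_states A t t' : step opeval A t t' ->
  step opeval (lta_map_states A) (term_map_states t) (term_map_states t').
Proof.
  induction 1 as [t t' Hr| | ]; simpl; rewrite ?map_app; simpl.
  - apply st_root; destruct Hr as [t v l q Ht Hv Hl|f qs q Hf].
    + eapply rs_lam; [rewrite teval_map_states; exact Ht | exact Hv |].
      exact (in_map trans_map_states _ _ Hl).
    + rewrite fapp_map_states; apply rs_sym.
      exact (in_map trans_map_states _ _ Hf).
  - now apply st_P.
  - now apply st_O.
Qed.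

Lemma steps_map_states A t t' : steps opeval A t t' ->
  steps opeval (lta_map_states A) (term_map_states t) (term_map_states t').
Proof.
  induction 1; [apply rt_step, step_map_states; assumption | apply rt_refl |].
  eapply rt_trans; eassumption.
Qed.

Lemma lang_q_map_states A q (t : term) : lang_q parity oarity opeval A q t ->
  lang_q parity oarity opeval (lta_map_states A) (h q) t.
Proof.
  intros (Hwf & Hground & t' & Hwf' & Hle & Hrun).
  split; [exact Hwf | split; [exact Hground |]].
  exists (term_map_states t'); split; [apply wf_map_states, Hwf' |].
  split; [apply tle_map_states, Hle | exact (steps_map_states Hrun)].
Qed.

Lemma lang_map_states A (t : term) : lang parity oarity opeval A t ->
  lang parity oarity opeval (lta_map_states A) t.
Proof.
  intros (q & Hq & Ht); exists (h q); split.
  - exact (in_map h _ _ Hq).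
  - apply lang_q_map_states, Ht.
Qed.

End StateMap.

Section Merge.
Variables (La : lattice) (P O Q X : Type).
Variables (parity : P -> nat) (oarity : O -> nat) (opeval : O -> list La -> La).
Variable Qdec : forall q q' : Q, {q = q'} + {q <> q'}.

Lemma merge_lta_map_states (A : lta La P O Q) q1 q2 :
  merge Qdec A q1 q2 = lta_map_states (rn Qdec q1 q2) A.
Proof. reflexivity. Qed.

Lemma lang_merge A q1 q2 (t : term La P O Q X) :
  lang parity oarity opeval A t -> lang parity oarity opeval (merge Qdec A q1 q2) t.
Proof. rewrite merge_lta_map_states; apply lang_map_states. Qed.

Lemma lang_merge_steps (E : list (equation La P O Q X)) A A' :
  clos_refl_trans _ (merge_step opeval Qdec E) A A' ->
  forall t : term La P O Q X,
    lang parity oarity opeval A t -> lang parity oarity opeval A' t.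
Proof.
  induction 1 as [A1 A2 []| |]; auto.
  intros t; apply lang_merge.
Qed.

End Merge.

Theorem mainTheorem4
  (La : lattice) (HLa : atomic La)
  (P O : Type) (parity : P -> nat) (oarity : O -> nat)
  (opeval : O -> list La -> La)
  (Q X : Type) (Qdec : forall q q' : Q, {q = q'} + {q <> q'})
  (E : list (equation La P O Q X))
  (A A' : lta La P O Q)
  (HA : wf_lta parity oarity A)
  (Hm : merge_norm opeval Qdec E A A') :
  forall t : term La P O Q X, lang parity oarity opeval A t -> lang parity oarity opeval A' t.
Proof.
  destruct Hm as [Hmerges _].
  exact (lang_merge_steps Hmerges).
Qed.
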